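(* Let $n\ge r\ge1$, let $\mathcal{O}\subset\mathbb{R}^{n\times r}$ be open with ${\rm St}(n,r)\subset\mathcal{O}$, let $f:\mathcal{O}\to\mathbb{R}$ be continuously differentiable, and consider (P): $\min_{X\in\mathcal{S}_{+}^{n,r}}f(X)$. Suppose that every global (respectively, local) minimizer of (P) has no zero rows when $n>r>1$, and that for every global (respectively, local) minimizer $X^*$ of (P) there exist $\delta'>0$ and $L'>0$ such that for all $X\in{\rm St}(n,r)$ with $\|X-X^*\|_F\le\delta'$ and all $\overline{X}\in{\rm Proj}_{\mathcal{S}_{+}^{n,r}}(X)$, $f(X)-f(\overline{X})\ge-L'\|X-\overline{X}\|_F^2$. Then for every global (respectively, local) minimizer $X^*$ of (P): 1. if $n=r$ or $n>r=1$, with $\kappa'>0$ a constant such that ${\rm dist}(Z,\mathcal{S}_{+}^{n,r})\le\kappa'{\rm dist}(Z,\mathbb{R}_{+}^{n\times r})$ for all $Z\in{\rm St}(n,r)$, there exists $\delta>0$ such that for all $X\in{\rm St}(n,r)$ with $\|X-X^*\|_F\le\delta$, $f(X)-f(X^* )+(\kappa')^2L'\|\max(0,-X)\|_F^2\ge0$; 2. if $n>r>1$, with $\kappa:=\frac{2.1\sqrt{r}[1+3r(n-r)]}{X^*_{i^*j^*}}$ ($X^*_{i^*j^*}$ the smallest nonzero entry of $X^*$), there exists $\delta>0$ such that for all $\epsilon\ge0$ and all $X\in\mathcal{G}_\epsilon:=\{X\in{\rm St}(n,r):\|\max(0,-X)\|_F^2=\epsilon\}$ with $\|X-X^*\|_F\le\delta$,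 $f(X)-f(X^* )+\kappa^2L'\|\max(0,-X)\|_F^2\ge0$. Consequently, there exists $\widehat{\rho}>0$ such that for every $\rho\ge\widehat{\rho}$ the problem $\min_{X\in{\rm St}(n,r)}\{f(X)+\rho\|\max(0,-X)\|_F^2\}$ has the same set of global optimal solutions as (P).
   Context: ${\rm St}(n,r):=\{X\in\mathbb{R}^{n\times r}: X^\top X=I_r\}$, $\mathbb{R}_{+}^{n\times r}$ the entrywise nonnegative matrices, $\mathcal{S}_{+}^{n,r}:=\mathbb{R}_{+}^{n\times r}\cap{\rm St}(n,r)$, ${\rm dist}$ the Frobenius-norm distance, ${\rm Proj}_\Omega(X)$ the set of nearest points of $\Omega$ to $X$; $\max(0,-X)$ is taken entrywise. *)

From HB Require Import structures.
From mathcomp Require Import all_boot all_order all_algebra.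
From mathcomp Require Import all_classical all_reals.
Set Implicit Arguments. Unset Strict Implicit. Unset Printing Implicit Defensive.
Import Order.TTheory GRing.Theory Num.Theory.
Local Open Scope ring_scope.
Local Open Scope classical_set_scope.

Section Defs.
Variable R : realType.
Variables n r : nat.
Local Notation M := 'M[R]_(n, r).

Definition fnorm (X : M) : R := Num.sqrt (\sum_i \sum_j (X i j) ^+ 2).
Definition frob_inner (X Y : M) : R := \sum_i \sum_j X i j * Y i j.

Definition stiefel : set M := [set X | X^T *m X = 1%:M].
Definition nonneg_mx : set M := [set X | forall i j, 0 <= X i j].
Definition stiefel_nonneg : set M := nonneg_mx `&` stiefel.

Definition negpart (X : M) : M := map_mx (fun x => Num.max 0 (- x)) X.

Definition mdist (Z : M) (S : set M) : R := inf [set fnorm (Z - W) | W in S].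

Definition proj (S : set M) (X : M) : set M :=
  [set Y | S Y /\ forall W, S W -> fnorm (X - Y) <= fnorm (X - W)].

Definition open_fro (O : set M) : Prop :=
  forall X, O X -> exists2 e : R, 0 < e & forall Y, fnorm (Y - X) < e -> O Y.

Definition C1_on (O : set M) (f : M -> R) : Prop :=
  exists G : M -> M,
    (forall X, O X -> forall e : R, 0 < e -> exists2 d : R, 0 < d &
       forall H, fnorm H < d ->
         `|f (X + H) - f X - frob_inner (G X) H| <= e * fnorm H) /\
    (forall X, O X -> forall e : R, 0 < e -> exists2 d : R, 0 < d &
       forall Y, O Y -> fnorm (Y - X) < d -> fnorm (G Y - G X) < e).

Definition is_gmin (S : set M) (g : M -> R) (X : M) : Prop :=
  S X /\ forall Y, S Y -> g X <= g Y.
Definition is_lmin (S : set M) (g : M -> R) (X : M) : Prop :=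
  S X /\ exists2 e : R, 0 < e & forall Y, S Y -> fnorm (Y - X) < e -> g X <= g Y.
Definition is_min (glob : bool) (S : set M) (g : M -> R) (X : M) : Prop :=
  if glob then is_gmin S g X else is_lmin S g X.

Definition no_zero_rows (X : M) : Prop := forall i, exists j, X i j != 0.

Definition is_min_nz_entry (X : M) (m : R) : Prop :=
  (exists i j, X i j = m) /\ m != 0 /\ (forall i j, X i j != 0 -> m <= X i j).

Definition lip_cond (f : M -> R) (Xs : M) (dl L : R) : Prop :=
  forall X, stiefel X -> fnorm (X - Xs) <= dl ->
  forall Xb, proj stiefel_nonneg X Xb -> f X - f Xb >= - (L * fnorm (X - Xb) ^+ 2).

Definition level_set (eps : R) : set M :=
  [set X | stiefel X /\ fnorm (negpart X) ^+ 2 = eps].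

End Defs.

From Pilot Require Import Defs.
From HB Require Import structures.
From mathcomp Require Import all_boot all_order all_algebra.
From mathcomp Require Import all_classical all_reals.
From mathcomp Require topology normedtype.
From mathcomp.algebra_tactics Require Import ring lra.
From mathcomp Require Import zify.
Import Order.TTheory GRing.Theory Num.Theory.
Local Open Scope ring_scope.
Local Open Scope classical_set_scope.

Set Implicit Arguments. Unset Strict Implicit. Unset Printing Implicit Defensive.

(* Near a minimizer [Xs] of [f] on [S+ = R+ ∩ St], the violation of
   nonnegativity controls the distance to [S+]:
   [dist(X, S+) <= K ||max(0,-X)||] for [X] in [St] close to [Xs].  Since the
   columns of [Xs] are nonnegative and orthonormal, every row of [Xs] has at
   most one nonzero entry; normalising the columns of the positive part of [X]
   restricted to this sparsity pattern gives a point of [S+] whose distance to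
   [X] is bounded, through the orthogonality of the columns of [X], by the
   negative part of [X].  At a nearest point [Xb] of [S+], the assumed
   inequality [f X - f Xb >= - L ||X - Xb||^2] then gives the local penalty
   inequalities.  For the exact penalty, every point of the compact set [St]
   has a neighbourhood on which some penalty parameter works (by continuity of
   [f], by the local inequality at global minimizers, or because
   [||max(0,-X)||] is bounded below away from [R+]); compactness makes the
   parameter uniform. *)

Section frobenius.
Variables (R : realType) (n r : nat).
Local Notation M := 'M[R]_(n, r).
Implicit Types (X Y Z : M) (F G : 'I_n -> 'I_r -> R).

Lemma ler_sum2 F G : (forall i j, F i j <= G i j) ->
  \sum_i \sum_j F i j <= \sum_i \sum_j G i j.
Proof. by move=> FG; apply: ler_sum => i _; apply: ler_sum. Qed.

Lemma sum2_ge0 F : (forall i j, 0 <= F i j) -> 0 <= \sum_i \sum_j F i j.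
Proof. by move=> F0; apply: sumr_ge0 => i _; apply: sumr_ge0. Qed.

Lemma sum2D F G :
  \sum_i \sum_j (F i j + G i j) = \sum_i \sum_j F i j + \sum_i \sum_j G i j.
Proof. by rewrite -big_split; apply: eq_bigr => i _; rewrite big_split. Qed.

Lemma mulr_sum2 a F : a * \sum_i \sum_j F i j = \sum_i \sum_j (a * F i j).
Proof. by rewrite mulr_sumr; apply: eq_bigr => i _; rewrite mulr_sumr. Qed.

Lemma ler_sum2_entry F i j : (forall i j, 0 <= F i j) -> F i j <= \sum_i \sum_j F i j.
Proof.
move=> F0; rewrite (bigD1 i) //= (bigD1 j) //= -addrA lerDl.
by apply: addr_ge0; [apply: sumr_ge0 | apply: sumr_ge0 => k _; apply: sumr_ge0].
Qed.

Definition fnorm2 X := \sum_i \sum_j X i j ^+ 2.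

Lemma fnorm2_ge0 X : 0 <= fnorm2 X.
Proof. by apply: sum2_ge0 => i j; apply: sqr_ge0. Qed.

Lemma fnorm_ge0 X : 0 <= fnorm X.
Proof. exact: sqrtr_ge0. Qed.

Lemma fnorm_sqr X : fnorm X ^+ 2 = fnorm2 X.
Proof. exact/sqr_sqrtr/fnorm2_ge0. Qed.

Lemma sqr_entry_le_fnorm2 X i j : X i j ^+ 2 <= fnorm2 X.
Proof. by apply: ler_sum2_entry => ? ?; apply: sqr_ge0. Qed.

Lemma abs_entry_le_fnorm X i j : `|X i j| <= fnorm X.
Proof. by rewrite -sqrtr_sqr ler_sqrt ?fnorm2_ge0 ?sqr_entry_le_fnorm2. Qed.

Lemma fnorm_le X e : 0 <= e -> fnorm2 X <= e ^+ 2 -> fnorm X <= e.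
Proof. by move=> e0 Xe; rewrite -(ger0_norm e0) -sqrtr_sqr ler_sqrt ?sqr_ge0. Qed.

Lemma fnorm_lt X e : 0 < e -> fnorm2 X < e ^+ 2 -> fnorm X < e.
Proof. by move=> e0 Xe; rewrite -(gtr0_norm e0) -sqrtr_sqr ltr_sqrt ?exprn_gt0. Qed.

Lemma fnorm2_eq0 X : fnorm2 X = 0 -> X = 0.
Proof.
move=> X0; apply/matrixP => i j; rewrite mxE; apply/eqP; rewrite -sqrf_eq0 eq_le.
by rewrite sqr_ge0 andbT -X0 sqr_entry_le_fnorm2.
Qed.

Lemma fnorm_eq0 X : fnorm X = 0 -> X = 0.
Proof. by move=> X0; apply: fnorm2_eq0; rewrite -fnorm_sqr X0 expr0n. Qed.

Lemma fnorm0 : fnorm (0 : M) = 0.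
Proof.
by rewrite /fnorm big1 ?sqrtr0 // => i _; rewrite big1 // => j _; rewrite mxE expr0n.
Qed.

Lemma fnormN X : fnorm (- X) = fnorm X.
Proof.
by congr Num.sqrt; apply: eq_bigr => i _; apply: eq_bigr => j _; rewrite mxE sqrrN.
Qed.

Lemma fnormB X Y : fnorm (X - Y) = fnorm (Y - X).
Proof. by rewrite -opprB fnormN. Qed.

Lemma frob_innerN X Y : frob_inner X (- Y) = - frob_inner X Y.
Proof.
rewrite /frob_inner -sumrN; apply: eq_bigr => i _; rewrite -sumrN.
by apply: eq_bigr => j _; rewrite mxE mulrN.
Qed.

Lemma fnorm2D X Y : fnorm2 (X + Y) = fnorm2 X + 2 * frob_inner X Y + fnorm2 Y.
Proof.
rewrite /fnorm2 /frob_inner mulr_sum2 -!sum2D.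
by apply: eq_bigr => i _; apply: eq_bigr => j _; rewrite mxE; ring.
Qed.

Lemma frob_inner_le X Y : frob_inner X Y <= fnorm X * fnorm Y.
Proof.
have [/fnorm_eq0 ->|a0] := eqVneq (fnorm X) 0.
  by rewrite fnorm0 mul0r /frob_inner big1 // => i _; rewrite big1 // => j _; rewrite mxE mul0r.
have [/fnorm_eq0 ->|b0] := eqVneq (fnorm Y) 0.
  by rewrite fnorm0 mulr0 /frob_inner big1 // => i _; rewrite big1 // => j _; rewrite mxE mulr0.
have {}a0 : 0 < fnorm X by rewrite lt_def a0 fnorm_ge0.
have {}b0 : 0 < fnorm Y by rewrite lt_def b0 fnorm_ge0.
(* summed termwise AM-GM: [2 a b x y <= b^2 x^2 + a^2 y^2] *)
have amgm : 2 * fnorm X * fnorm Y * frob_inner X Y <=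
    fnorm Y ^+ 2 * fnorm2 X + fnorm X ^+ 2 * fnorm2 Y.
  rewrite /frob_inner /fnorm2 !mulr_sum2 -sum2D; apply: ler_sum2 => i j.
  by have := sqr_ge0 (fnorm Y * X i j - fnorm X * Y i j); nra.
rewrite -!fnorm_sqr in amgm.
have := mulr_gt0 a0 b0; nra.
Qed.

Lemma fnormD_le X Y : fnorm (X + Y) <= fnorm X + fnorm Y.
Proof.
apply: fnorm_le; first by rewrite addr_ge0 ?fnorm_ge0.
by rewrite fnorm2D -!fnorm_sqr; have := frob_inner_le X Y; nra.
Qed.

Lemma fnorm_distD X Y Z : fnorm (X - Z) <= fnorm (X - Y) + fnorm (Y - Z).
Proof. by have := fnormD_le (X - Y) (Y - Z); rewrite addrA subrK. Qed.

Lemma fnorm2_le_entries X e : (forall i j, `|X i j| <= e) -> fnorm2 X <= (n * r)%:R * e ^+ 2.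
Proof.
move=> Xe; apply: le_trans (_ : _ <= \sum_(i : 'I_n) \sum_(j : 'I_r) e ^+ 2) _.
  by apply: ler_sum2 => i j; rewrite -real_normK ?num_real // lerXn2r ?nnegrE // (le_trans _ (Xe i j)).
by rewrite !sumr_const !card_ord -mulrnA mulr_natl mulnC.
Qed.

Lemma mdist_le (S : set M) X W : S W -> mdist X S <= fnorm (X - W).
Proof.
move=> SW; apply: ge_inf; last by exists W.
by exists 0 => _ [V _ <-]; apply: fnorm_ge0.
Qed.

Lemma proj_le_mdist (S : set M) X Xb : Defs.proj S X Xb -> fnorm (X - Xb) <= mdist X S.
Proof.
move=> [SXb Xb_min]; apply: lb_le_inf; first by exists (fnorm (X - Xb)), Xb.
by move=> _ [W SW <-]; apply: Xb_min.
Qed.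

End frobenius.

Lemma neg_mul_le_negpart (R : realType) (x y : R) : `|x| <= 1 -> `|y| <= 1 ->
  - (x * y) <= Num.max 0 (- x) + Num.max 0 (- y).
Proof.
rewrite !ler_norml => /andP [x1 x2] /andP [y1 y2].
have nx0 : 0 <= Num.max 0 (- x) by rewrite le_max lexx.
have nx : - x <= Num.max 0 (- x) by rewrite le_max lexx orbT.
have ny0 : 0 <= Num.max 0 (- y) by rewrite le_max lexx.
have ny : - y <= Num.max 0 (- y) by rewrite le_max lexx orbT.
have [x0|x0] := leP 0 x; have [y0|y0] := leP 0 y; nra.
Qed.

Section sign_parts.
Variables (R : realType) (n r : nat).
Local Notation M := 'M[R]_(n, r).
Implicit Types X : M.

Definition pospart X : M := map_mx (fun x => Num.max 0 x) X.

Lemma negpart_ge0 X i j : 0 <= negpart X i j.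
Proof. by rewrite mxE le_max lexx. Qed.

Lemma negpart_ge_opp X i j : - X i j <= negpart X i j.
Proof. by rewrite mxE le_max lexx orbT. Qed.

Lemma pospart_ge0 X i j : 0 <= pospart X i j.
Proof. by rewrite mxE le_max lexx. Qed.

Lemma pospart_negpartE X i j : X i j = pospart X i j - negpart X i j.
Proof.
rewrite !mxE /=; have [x0|x0] := leP 0 (X i j).
  by rewrite max_l ?oppr_le0 // subr0.
by rewrite max_r ?oppr_ge0 ?(ltW x0) // sub0r opprK.
Qed.

Lemma pospart_negpart_mul0 X i j : pospart X i j * negpart X i j = 0.
Proof.
rewrite !mxE /=; have [x0|x0] := leP 0 (X i j); last by rewrite mul0r.
by rewrite max_l ?oppr_le0 // mulr0.
Qed.

Lemma negpart_eq0 X : negpart X = 0 <-> nonneg_mx X.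
Proof.
split=> [N0 i j | X0]; last by apply/matrixP => i j; rewrite !mxE max_l // oppr_le0.
by have := negpart_ge_opp X i j; rewrite N0 mxE oppr_le0.
Qed.

Lemma fnorm_negpart_eq0 X : fnorm (negpart X) = 0 <-> nonneg_mx X.
Proof. by split=> [/fnorm_eq0/negpart_eq0 // | /negpart_eq0 ->]; apply: fnorm0. Qed.

Lemma mdist_nonneg_le X : mdist X (@nonneg_mx R n r) <= fnorm (negpart X).
Proof.
have XN : nonneg_mx (X + negpart X).
  by move=> i j; rewrite mxE; have := negpart_ge_opp X i j; lra.
apply: le_trans (mdist_le X XN) _.
by rewrite opprD addrA subrr sub0r fnormN.
Qed.

End sign_parts.

Section stiefel.
Variables (R : realType) (n r : nat).
Local Notation M := 'M[R]_(n, r).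
Implicit Types X Xs : M.

Lemma stiefelE X : stiefel X <-> forall j k, \sum_i X i j * X i k = (j == k)%:R.
Proof.
rewrite /stiefel /=; split=> [XX j k | XX].
  by have /matrixP/(_ j k) := XX; rewrite !mxE => <-; apply: eq_bigr => i _; rewrite mxE.
by apply/matrixP => j k; rewrite !mxE -XX; apply: eq_bigr => i _; rewrite mxE.
Qed.

Lemma stiefel_col X j : stiefel X -> \sum_i X i j ^+ 2 = 1.
Proof. by move/stiefelE/(_ j j); rewrite eqxx. Qed.

Lemma stiefel_entry_le1 X i j : stiefel X -> `|X i j| <= 1.
Proof.
move=> /(stiefel_col j) col1; rewrite -(expr_le1 (n := 2)) // real_normK ?num_real //.
by rewrite -col1 (bigD1 i) //= lerDl sumr_ge0 // => k _; apply: sqr_ge0.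
Qed.

Lemma pid_mx_stiefel_nonneg : (r <= n)%N -> stiefel_nonneg (pid_mx r : M).
Proof.
move=> rn; split; first by move=> i j; rewrite mxE ler0n.
by rewrite /stiefel /= tr_pid_mx pid_mx_id // pid_mx_1.
Qed.

Lemma square_stiefel_no_zero_rows X : n = r -> stiefel X -> no_zero_rows X.
Proof.
move=> nr; move: X; rewrite nr => X XX i; apply: contrapT => /forallNP Xi0.
have /matrixP/(_ i i) := mulmx1C XX; rewrite !mxE eqxx big1 => [/esym/eqP|j _].
  by rewrite oner_eq0.
by have /negP := Xi0 j; rewrite negbK => /eqP ->; rewrite mul0r.
Qed.

Lemma stiefel_nonneg_row_support Xs i j k :
  stiefel_nonneg Xs -> Xs i j != 0 -> Xs i k != 0 -> j = k.
Proof.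
move=> [XN /stiefelE XX] Xij Xik; apply/eqP; apply: contraT => jk.
have := XX j k; rewrite (negbTE jk) => /psumr_eq0P/(_ i isT)/eqP.
by rewrite mulf_eq0 (negbTE Xij) (negbTE Xik); apply => l _; apply: mulr_ge0.
Qed.

Lemma exists_support_map Xs : stiefel_nonneg Xs -> (0 < r)%N ->
  exists c : 'I_n -> 'I_r, forall i j, Xs i j != 0 -> c i = j.
Proof.
move=> XS r0.
suff /choice [c cP] : forall i, exists c : 'I_r, forall j, Xs i j != 0 -> c = j.
  by exists c.
move=> i.
have [[j Xij] | Xi0] := pselect (exists j, Xs i j != 0).
  by exists j => k Xik; apply: stiefel_nonneg_row_support XS Xij Xik.
by exists (Ordinal r0) => k Xik; case: Xi0; exists k.
Qed.

Lemma exists_min_nz_entry Xs : stiefel_nonneg Xs -> (0 < r)%N ->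
  exists m, is_min_nz_entry Xs m.
Proof.
move=> [_ XX] r0.
have [i Xi] : exists i, Xs i (Ordinal r0) != 0.
  apply: contrapT => /forallNP X0; move: (stiefel_col (Ordinal r0) XX).
  rewrite big1 => [/esym/eqP|i _]; first by rewrite oner_eq0.
  by have /negP := X0 i; rewrite negbK => /eqP ->; rewrite expr0n.
pose nz (p : 'I_n * 'I_r) := Xs p.1 p.2 != 0.
have nz0 : nz (i, Ordinal r0) by [].
case: (arg_minP (fun p => Xs p.1 p.2) nz0) => [[i0 j0] /= Xij0 le_m].
exists (Xs i0 j0); split; first by exists i0, j0.
by split=> // i' j' Xij; apply: (le_m (i', j')).
Qed.

Lemma min_nz_entry_gt0 Xs m : nonneg_mx Xs -> is_min_nz_entry Xs m -> 0 < m.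
Proof. by move=> XN [[i [j <-]] [m0 _]]; rewrite lt_def m0 XN. Qed.

Lemma min_nz_entry_le1 Xs m : stiefel Xs -> is_min_nz_entry Xs m -> m <= 1.
Proof. by move=> XX [[i [j <-]] _]; apply: le_trans (stiefel_entry_le1 i j XX); apply: ler_norm. Qed.

End stiefel.

Lemma sqr_sum_le (R : realType) (I : finType) (x : I -> R) :
  (\sum_i x i) ^+ 2 <= #|I|%:R * \sum_i x i ^+ 2.
Proof.
have : 2 * (\sum_i x i) ^+ 2 <= \sum_i \sum_j (x i ^+ 2 + x j ^+ 2).
  rewrite expr2 mulr_suml mulr_sumr; apply: ler_sum => i _.
  rewrite !mulr_sumr; apply: ler_sum => j _.
  by have := sqr_ge0 (x i - x j); nra.
have -> : \sum_i \sum_j (x i ^+ 2 + x j ^+ 2) = 2 * (#|I|%:R * \sum_i x i ^+ 2).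
  under eq_bigr do rewrite big_split /= sumr_const.
  by rewrite big_split /= sumr_const sumrMnl; ring.
lra.
Qed.

Definition error_bound_const (R : realType) (n r : nat) : R :=
  2 + 5 * (n%:R ^+ 2 * (r%:R + 1)).

Lemma error_bound_const_ge0 (R : realType) (n r : nat) : 0 <= error_bound_const R n r.
Proof. by rewrite addr_ge0 ?mulr_ge0 ?sqr_ge0 ?addr_ge0 ?ler0n. Qed.

Section error_bound.
Variables (R : realType) (n r : nat).
Local Notation M := 'M[R]_(n, r).
Variables (Xs : M) (c : 'I_n -> 'I_r) (m : R).
Hypotheses (XsS : stiefel_nonneg Xs) (c_supp : forall i j, Xs i j != 0 -> c i = j)
  (Xs_rows : (1 < r)%N -> no_zero_rows Xs) (Xs_min : is_min_nz_entry Xs m).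
Variables (X : M) (XX : stiefel X) (X_near : 10 * fnorm (X - Xs) <= m).

Local Notation P := (pospart X).
Local Notation N := (negpart X).

Let m_gt0 : 0 < m := min_nz_entry_gt0 XsS.1 Xs_min.
Let m_le1 : m <= 1 := min_nz_entry_le1 XsS.2 Xs_min.

Lemma support_entry_ge i j : Xs i j != 0 -> 9 * m <= 10 * X i j.
Proof.
move=> Xij; have [_ [_ /(_ i j Xij) mXs]] := Xs_min.
have := abs_entry_le_fnorm (X - Xs) i j; rewrite !mxE ler_norml => /andP [lo hi].
have := X_near; lra.
Qed.

Lemma support_negpart0 i j : Xs i j != 0 -> P i j = X i j /\ N i j = 0.
Proof.
move=> /support_entry_ge X_ge; have X0 : 0 <= X i j by have := m_gt0; lra.
by rewrite !mxE /= max_r // max_l // oppr_le0.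
Qed.

Lemma support_row_neq0 i k : k != c i -> Xs i (c i) != 0.
Proof.
move=> kc; have r1 : (1 < r)%N.
  rewrite ltnNge; apply: contra kc => r1; apply/eqP/ord_inj.
  by have := ltn_ord k; have := ltn_ord (c i); lia.
by have [j Xij] := Xs_rows r1 i; rewrite (c_supp Xij).
Qed.

Definition pat_sqnorm j := \sum_i (if c i == j then P i j ^+ 2 else 0).
Definition pat_norm j := Num.sqrt (pat_sqnorm j).

(* Column j of [pattern_proj] is the normalised positive part of column j of
   [X] restricted to the rows [i] with [c i = j]: the nearest point to [X] among
   the nonnegative Stiefel matrices with the sparsity pattern [c]. *)
Definition pattern_proj : M :=
  \matrix_(i, j) if c i == j then P i j / pat_norm j else 0.

Lemma pat_sqnorm_gt0 j : 0 < pat_sqnorm j.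
Proof.
have [i Xij] : exists i, Xs i j != 0.
  apply: contrapT => /forallNP Xj0; have := stiefel_col j XsS.2.
  rewrite big1 => [/esym/eqP|i _]; first by rewrite oner_eq0.
  by have /negP := Xj0 i; rewrite negbK => /eqP ->; rewrite expr0n.
have [PX _] := support_negpart0 Xij; have := support_entry_ge Xij.
rewrite /pat_sqnorm (bigD1 i) //= (c_supp Xij) eqxx PX => X_ge.
have : 0 <= \sum_(l | l != i) (if c l == j then P l j ^+ 2 else 0).
  by apply: sumr_ge0 => l _; case: ifP => _ //; apply: sqr_ge0.
have : 0 < X i j ^+ 2 by rewrite exprn_gt0 //; have := m_gt0; lra.
lra.
Qed.

Lemma pat_norm_gt0 j : 0 < pat_norm j.
Proof. by rewrite sqrtr_gt0 pat_sqnorm_gt0. Qed.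

Lemma pat_norm_sqr j : pat_norm j ^+ 2 = pat_sqnorm j.
Proof. exact/sqr_sqrtr/ltW/pat_sqnorm_gt0. Qed.

Lemma pattern_proj_stiefel_nonneg : stiefel_nonneg pattern_proj.
Proof.
have nu0 := pat_norm_gt0; split.
  move=> i j; rewrite mxE; case: ifP => // _.
  by rewrite divr_ge0 ?pospart_ge0 ?ltW.
apply/stiefelE => j k; have [<-|jk] := eqVneq j k.
  rewrite ?eqxx; transitivity (pat_sqnorm j / pat_norm j ^+ 2).
    rewrite /pat_sqnorm mulr_suml; apply: eq_bigr => i _; rewrite !mxE.
    by case: ifP => _; [field; apply: lt0r_neq0 | rewrite !mul0r].
  by rewrite pat_norm_sqr divff // lt0r_neq0 // pat_sqnorm_gt0.
rewrite big1 // => i _; rewrite !mxE.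
by case: (eqVneq (c i) j) => [->|_]; rewrite ?(negbTE jk) ?mulr0 ?mul0r.
Qed.

Definition off_pattern := \sum_i \sum_j (if c i == j then 0 else P i j ^+ 2).

Lemma fnorm2_sub_pattern_proj :
  fnorm2 (X - pattern_proj) = fnorm2 N + \sum_j (pat_norm j - 1) ^+ 2 + off_pattern.
Proof.
have nu_pat j : (pat_norm j - 1) ^+ 2 =
    \sum_i (if c i == j then P i j ^+ 2 * (1 - (pat_norm j)^-1) ^+ 2 else 0).
  have := pat_norm_gt0 j => nu0.
  transitivity (pat_sqnorm j * (1 - (pat_norm j)^-1) ^+ 2).
    by rewrite -pat_norm_sqr; field; apply: lt0r_neq0.
  rewrite /pat_sqnorm mulr_suml; apply: eq_bigr => i _.
  by case: ifP => _; rewrite ?mul0r.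
under [\sum_j (_ - 1) ^+ 2]eq_bigr do rewrite nu_pat.
rewrite exchange_big /= /fnorm2 /off_pattern -!sum2D.
apply: eq_bigr => i _; apply: eq_bigr => j _.
have PN := pospart_negpart_mul0 X i j.
have -> : (X - pattern_proj) i j = X i j - pattern_proj i j by rewrite !mxE.
rewrite [pattern_proj i j]mxE (pospart_negpartE X i j); case: ifP => _.
  have -> : (P i j - N i j - P i j / pat_norm j) ^+ 2 = N i j ^+ 2 +
      P i j ^+ 2 * (1 - (pat_norm j)^-1) ^+ 2 - 2 * (1 - (pat_norm j)^-1) * (P i j * N i j).
    by ring.
  by rewrite PN mulr0 subr0 addr0.
have -> : (P i j - N i j - 0) ^+ 2 = N i j ^+ 2 + P i j ^+ 2 - 2 * (P i j * N i j) by ring.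
by rewrite PN mulr0 subr0 addr0.
Qed.

Lemma pattern_col_split j :
  pat_norm j ^+ 2 + \sum_i (if c i == j then 0 else P i j ^+ 2) + \sum_i N i j ^+ 2 = 1.
Proof.
rewrite pat_norm_sqr -(stiefel_col j XX) /pat_sqnorm -!big_split; apply: eq_bigr => i _ /=.
have PN := pospart_negpart_mul0 X i j; rewrite [X i j]pospart_negpartE.
have -> : (P i j - N i j) ^+ 2 = P i j ^+ 2 + N i j ^+ 2 - 2 * (P i j * N i j) by ring.
by rewrite PN mulr0 subr0; case: ifP => _; rewrite ?addr0 ?add0r.
Qed.

Lemma sum_pat_norm_sub1_le : \sum_j (pat_norm j - 1) ^+ 2 <= off_pattern + fnorm2 N.
Proof.
rewrite /off_pattern /fnorm2 exchange_big [X in _ + X]exchange_big -big_split /=.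
apply: ler_sum => j _; have := pattern_col_split j; have := pat_norm_gt0 j.
have : 0 <= \sum_i (if c i == j then 0 else P i j ^+ 2).
  by apply: sumr_ge0 => i _; case: ifP => _ //; apply: sqr_ge0.
have : 0 <= \sum_i N i j ^+ 2 by apply: sumr_ge0 => i _; apply: sqr_ge0.
nra.
Qed.

Definition negcol j := \sum_l N l j.

Lemma negcol_ge0 j : 0 <= negcol j.
Proof. by apply: sumr_ge0 => l _; apply: negpart_ge0. Qed.

(* Columns [c i] and [k] of [X] are orthogonal, and [X i (c i)] is close to
   [Xs i (c i) >= m]; so a large positive [X i k] must be compensated by
   negative entries in these two columns. *)
Lemma off_pattern_entry_le i k : k != c i ->
  9 * m * P i k <= 10 * (negcol (c i) + negcol k).
Proof.
move=> kc; have Xci := support_entry_ge (support_row_neq0 kc).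
have := (stiefelE X).1 XX (c i) k; rewrite eq_sym (negbTE kc) (bigD1 i) //= => orth.
have rest : - \sum_(l | l != i) X l (c i) * X l k <= negcol (c i) + negcol k.
  rewrite -sumrN; apply: le_trans (_ : _ <= \sum_(l | l != i) (N l (c i) + N l k)) _.
    apply: ler_sum => l _; rewrite !mxE; apply: neg_mul_le_negpart; exact: stiefel_entry_le1.
  rewrite /negcol -big_split /= [X in _ <= X](bigD1 i) //= lerDr.
  by rewrite addr_ge0 ?negpart_ge0.
have := negcol_ge0 (c i); have := negcol_ge0 k; have := m_gt0.
have [P0|/negbTE Pneq0] := eqVneq (P i k) 0; first by rewrite P0; lra.
have := pospart_negpart_mul0 X i k; move/eqP; rewrite mulf_eq0 Pneq0 /= => /eqP N0.
have := pospart_ge0 X i k; have XP := pospart_negpartE X i k; rewrite N0 subr0 in XP.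
rewrite XP in orth; nra.
Qed.

Lemma off_pattern_le :
  81 * m ^+ 2 * off_pattern <= 200 * (n%:R ^+ 2 * (r%:R + 1)) * fnorm2 N.
Proof.
pose SA := \sum_j negcol j ^+ 2.
have SA_le : SA <= n%:R * fnorm2 N.
  rewrite /SA /fnorm2 exchange_big /= mulr_sumr; apply: ler_sum => j _.
  by have := sqr_sum_le (fun l => N l j); rewrite card_ord.
have SA0 : 0 <= SA by apply: sumr_ge0 => j _; apply: sqr_ge0.
apply: le_trans (_ : _ <= \sum_(i : 'I_n) \sum_(k : 'I_r) (200 * (SA + negcol k ^+ 2))) _.
  rewrite /off_pattern mulr_sum2; apply: ler_sum2 => i k.
  case: ifP => [_|/negbT]; first by rewrite mulr0; have := sqr_ge0 (negcol k); lra.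
  rewrite eq_sym => /off_pattern_entry_le entry_le.
  have SA_ci : negcol (c i) ^+ 2 <= SA.
    by rewrite /SA (bigD1 (c i)) //= lerDl sumr_ge0 // => l _; apply: sqr_ge0.
  have u0 : 0 <= 9 * m * P i k by rewrite !mulr_ge0 ?pospart_ge0 // ltW.
  have := negcol_ge0 (c i); have := negcol_ge0 k => b0 a0.
  have : (9 * m * P i k) ^+ 2 <= 200 * (negcol (c i) ^+ 2 + negcol k ^+ 2).
    have := sqr_ge0 (negcol (c i) - negcol k).
    have : 0 <= (10 * (negcol (c i) + negcol k) - 9 * m * P i k) *
                (10 * (negcol (c i) + negcol k) + 9 * m * P i k) by rewrite mulr_ge0 //; lra.
    nra.
  have -> : (9 * m * P i k) ^+ 2 = 81 * m ^+ 2 * P i k ^+ 2 by ring.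
  lra.
have -> : \sum_(i : 'I_n) \sum_(k : 'I_r) (200 * (SA + negcol k ^+ 2)) =
    200 * (n%:R * (r%:R + 1)) * SA.
  under eq_bigr do rewrite -mulr_sumr big_split /= sumr_const card_ord.
  by rewrite sumr_const card_ord /SA; ring.
apply: le_trans (_ : _ <= 200 * (n%:R * (r%:R + 1)) * (n%:R * fnorm2 N)) _.
  by apply: ler_wpM2l SA_le; rewrite !mulr_ge0 ?addr_ge0 ?ler0n.
by rewrite le_eqVlt; apply/orP; left; apply/eqP; ring.
Qed.

Lemma pattern_proj_near :
  m ^+ 2 * fnorm2 (X - pattern_proj) <= error_bound_const R n r * fnorm2 N.
Proof.
rewrite fnorm2_sub_pattern_proj /error_bound_const.
have T_le := sum_pat_norm_sub1_le; have O_le := off_pattern_le.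
set T := \sum_j _ in T_le *; set K := n%:R ^+ 2 * (r%:R + 1) in O_le *.
have K0 : 0 <= K by rewrite mulr_ge0 ?sqr_ge0 ?addr_ge0 ?ler0n.
have O0 : 0 <= off_pattern by apply: sum2_ge0 => i j; case: ifP => _ //; apply: sqr_ge0.
have N0 := fnorm2_ge0 N.
have m2 : 0 <= m ^+ 2 <= 1 by rewrite sqr_ge0 expr_le1 ?m_le1 // ltW.
have /andP [m20 m21] := m2.
have : 0 <= m ^+ 2 * (off_pattern + fnorm2 N - T) by rewrite mulr_ge0 // subr_ge0.
have : 0 <= (1 - m ^+ 2) * fnorm2 N by rewrite mulr_ge0 // subr_ge0.
have := mulr_ge0 K0 N0.
nra.
Qed.

End error_bound.

Lemma stiefel_nonneg_error_bound (R : realType) (n r : nat) (Xs : 'M[R]_(n, r)) m K :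
  stiefel_nonneg Xs -> ((1 < r)%N -> no_zero_rows Xs) -> is_min_nz_entry Xs m ->
  0 <= K -> error_bound_const R n r <= (K * m) ^+ 2 ->
  forall X, stiefel X -> fnorm (X - Xs) <= m / 10 ->
  mdist X (@stiefel_nonneg R n r) <= K * fnorm (negpart X).
Proof.
move=> XsS Xs_rows Xs_min K0 CK X XX X_near.
have m0 := min_nz_entry_gt0 XsS.1 Xs_min.
have r0 : (0 < r)%N by case: Xs_min => [[_ [j _]] _]; apply: leq_ltn_trans (ltn_ord j).
have [c c_supp] := exists_support_map XsS r0.
have X_near' : 10 * fnorm (X - Xs) <= m by rewrite mulrC -ler_pdivlMr.
have YS := pattern_proj_stiefel_nonneg XsS c_supp Xs_min X_near'.
apply: le_trans (mdist_le X YS) _.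
rewrite -(ler_pXn2r (_ : 0 < 2)%N) ?nnegrE ?mulr_ge0 ?fnorm_ge0 //.
rewrite -(ler_pM2l (exprn_gt0 2 m0)) exprMn !fnorm_sqr.
apply: le_trans (pattern_proj_near XsS c_supp Xs_rows Xs_min XX X_near') _.
apply: le_trans (ler_wpM2r (fnorm2_ge0 _) CK) _.
by rewrite le_eqVlt; apply/orP; left; apply/eqP; ring.
Qed.

Section sequential_compactness.
Variables (R : realType) (n r : nat).
Local Notation M := 'M[R]_(n, r).
Implicit Types (S : set M) (u : nat -> M) (X Y Z : M).

Definition cluster_pt u Y :=
  forall e, 0 < e -> forall N, exists2 k, (N <= k)%N & fnorm (u k - Y) < e.

Definition closed_fro S :=
  forall Y, (forall e, 0 < e -> exists2 W, S W & fnorm (W - Y) < e) -> S Y.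

Definition seq_compact S :=
  forall u, (forall k, S (u k)) -> exists2 Y, S Y & cluster_pt u Y.

Section entrywise_cluster.
Import topology normedtype numFieldNormedType.Exports.

Lemma bounded_seq_entry_cluster u : (forall k i j, `|u k i j| <= 1) ->
  exists Y, forall e, 0 < e -> forall N,
    exists2 k, (N <= k)%N & forall i j, `|u k i j - Y i j| < e.
Proof.
move=> u1.
pose box := [set v : 'rV[R]_(n * r) | forall l, `[-1, 1]%classic (v ord0 l)].
have box_compact : compact box.
  exact: (@rV_compact R _ (fun=> `[-1, 1]%classic) (fun=> @segment_compact R (-1) 1)).
have box_u : ((fun k => mxvec (u k)) @ \oo) box.
  apply: (@filterE nat) => k /= l; case/mxvec_indexP: l => i j.
  by rewrite /= mxvecE in_itv /= -ler_norml u1.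
have [v [_ v_cl]] := box_compact _ _ box_u.
exists (vec_mx v) => e e0 N.
case: (v_cl [set w | exists2 k, (N <= k)%N & w = mxvec (u k)] (ball v e)).
- by exists N => // k /= Nk; exists k.
- exact: nbhsx_ballx.
move=> w [[k Nk ->]] [_ vk].
exists k => // i j; have := vk 0 (mxvec_index i j).
by rewrite /ball /= mxvecE /vec_mx mxE distrC.
Qed.

End entrywise_cluster.

Lemma bounded_seq_cluster u : (forall k i j, `|u k i j| <= 1) -> exists Y, cluster_pt u Y.
Proof.
move=> /bounded_seq_entry_cluster [Y uY]; exists Y => e e0 N.
have K0 : 0 < (n * r)%:R + 1 :> R by rewrite ltr_wpDl.
have [k Nk ukY] := uY (e / ((n * r)%:R + 1)) (divr_gt0 e0 K0) N.
exists k => //; apply: fnorm_lt => //.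
apply: le_lt_trans (fnorm2_le_entries (e := e / ((n * r)%:R + 1)) _) _.
  by move=> i j; rewrite !mxE ltW.
set K : R := (n * r)%:R in K0 *; set t := e / (K + 1).
have t0 : 0 < t by rewrite divr_gt0.
have -> : e = t * (K + 1) by rewrite mulfVK // gt_eqF.
have := ler0n R (n * r); rewrite -/K; nra.
Qed.

Lemma closed_froI S1 S2 : closed_fro S1 -> closed_fro S2 -> closed_fro (S1 `&` S2).
Proof.
move=> S1c S2c Y Yapp; split; [apply: S1c | apply: S2c] => e e0;
  by have [W [? ?] ?] := Yapp e e0; exists W.
Qed.

Lemma closed_nonneg : closed_fro (@nonneg_mx R n r).
Proof.
move=> Y Yapp i j; apply/ler_addgt0Pr => e e0; have [W WN WY] := Yapp e e0.
have := le_lt_trans (abs_entry_le_fnorm (W - Y) i j) WY.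
by rewrite !mxE ltr_norml => /andP [lo hi]; have := WN i j; lra.
Qed.

Lemma eq0_of_abs_le_mul (t C : R) : (forall e, 0 < e -> `|t| <= C * e) -> t = 0.
Proof.
move=> tC; apply/normr0_eq0/eqP; rewrite eq_le normr_ge0 andbT.
apply/ler_addgt0Pr => e e0; rewrite add0r.
have C1 : 0 < `|C| + 1 by rewrite ltr_wpDl.
have := tC _ (divr_gt0 e0 C1); have := ler_norm C.
rewrite mulrA ler_pdivlMr // => CC tle.
by have := mulr_ge0 (ltW e0) (normr_ge0 C); nra.
Qed.

Lemma closed_stiefel : closed_fro (@stiefel R n r).
Proof.
move=> Y Yapp; have Y2 i j : `|Y i j| <= 2.
  have [W /(stiefel_entry_le1 i j) W1 WY] := Yapp 1 ltr01.
  have := le_lt_trans (abs_entry_le_fnorm (W - Y) i j) WY; rewrite !mxE.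
  by move: W1; rewrite !ler_norml !ltr_norml => /andP [? ?] /andP [? ?]; apply/andP; split; lra.
apply/stiefelE => j k; apply/eqP; rewrite -subr_eq0; apply/eqP.
apply: (@eq0_of_abs_le_mul _ (3 * n%:R)) => e e0; have [W WS WY] := Yapp e e0.
rewrite -((stiefelE W).1 WS j k) -sumrB.
apply: le_trans (ler_norm_sum _ _ _) _.
apply: le_trans (_ : _ <= \sum_(i : 'I_n) 3 * e) _; last first.
  by rewrite sumr_const card_ord -mulr_natl; lra.
apply: ler_sum => i _.
have := le_lt_trans (abs_entry_le_fnorm (W - Y) i j) WY.
have := le_lt_trans (abs_entry_le_fnorm (W - Y) i k) WY.
have := stiefel_entry_le1 i k WS; have := Y2 i j.
rewrite !mxE -[_ * _ - _](_ : Y i j * (Y i k - W i k) + (Y i j - W i j) * W i k = _); last by ring.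
rewrite !ler_norml !ltr_norml => /andP [? ?] /andP [? ?] /andP [? ?] /andP [? ?].
by apply/andP; split; nra.
Qed.

Lemma closed_stiefel_nonneg : closed_fro (@stiefel_nonneg R n r).
Proof. exact: closed_froI closed_nonneg closed_stiefel. Qed.

Lemma seq_compact_closed S : S `<=` @stiefel R n r -> closed_fro S -> seq_compact S.
Proof.
move=> S_st Sc u Su.
have [Y uY] := bounded_seq_cluster (fun k i j => stiefel_entry_le1 i j (S_st _ (Su k))).
exists Y => //; apply: Sc => e e0; have [k _ ukY] := uY e e0 0%N.
by exists (u k).
Qed.

Lemma seq_compact_uniform S (P : R -> M -> Prop) : seq_compact S ->
  (forall a b Z, S Z -> a <= b -> P a Z -> P b Z) ->
  (forall Y, S Y -> exists2 d, 0 < d & exists a, forall Z, S Z -> fnorm (Z - Y) < d -> P a Z) ->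
  exists a, forall Z, S Z -> P a Z.
Proof.
move=> Sc Pmono Ploc; apply: contrapT => /forallNP noP.
have /choice [u uP] : forall k : nat, exists Z, S Z /\ ~ P k%:R Z.
  by move=> k; have /existsNP [Z /not_implyP ZP] := noP k%:R; exists Z.
have [Y SY uY] := Sc u (fun k => (uP k).1).
have [d d0 [a aP]] := Ploc Y SY.
have [k ak ukY] := uY d d0 (Num.Def.archi_bound `|a|).
apply: (uP k).2; apply: Pmono (uP k).1 _ (aP _ (uP k).1 ukY).
have := archi_boundP (normr_ge0 a); rewrite -(ler_nat R) in ak.
by have := ler_norm a; lra.
Qed.

Definition cont_within S (g : M -> R) := forall Y, S Y -> forall e, 0 < e ->
  exists2 d, 0 < d & forall Z, S Z -> fnorm (Z - Y) < d -> `|g Z - g Y| < e.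

Lemma seq_compact_argmin S g : seq_compact S -> (exists Z, S Z) -> cont_within S g ->
  exists2 Z0, S Z0 & forall Z, S Z -> g Z0 <= g Z.
Proof.
move=> Sc [Z1 SZ1] gc.
have [B gB] : exists B, forall Z, S Z -> - B <= g Z.
  apply: seq_compact_uniform Sc _ _ => [a b Z _ ab | Y SY]; first by lra.
  have [d d0 gY] := gc Y SY 1 ltr01; exists d => //; exists (1 - g Y) => Z SZ ZY.
  by have := gY Z SZ ZY; rewrite ltr_norml => /andP [lo hi]; lra.
pose E := [set g Z | Z in S].
have Einf : has_inf E by split; [exists (g Z1), Z1 | exists (- B) => _ [Z SZ <-]; apply: gB].
have infE Z : S Z -> inf E <= g Z by move=> SZ; apply: (ge_inf Einf.2); exists Z.
apply: contrapT => nomin.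
have gt_inf Y : S Y -> inf E < g Y.
  move=> SY; rewrite lt_def infE // andbT; apply/eqP => gYE.
  by apply: nomin; exists Y => // Z SZ; rewrite gYE infE.
(* if the infimum is not attained, [g - inf E] is locally, hence uniformly,
   bounded away from [0] *)
have [a aP] : exists a, forall Z, S Z -> 1 <= a * (g Z - inf E).
  apply: seq_compact_uniform Sc _ _ => [a b Z SZ ab | Y SY].
    by move/le_trans; apply; apply: ler_wpM2r ab; rewrite subr_ge0 infE.
  have dY : 0 < g Y - inf E by rewrite subr_gt0 gt_inf.
  have [d d0 gY] := gc Y SY _ (divr_gt0 dY (ltr0n _ 2)).
  exists d => //; exists (2 / (g Y - inf E)) => Z SZ ZY.
  have := gY Z SZ ZY; rewrite ltr_norml => /andP [lo _].
  rewrite mulrC -ler_pdivrMr ?divr_gt0 // invf_div; lra.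
have a0 : 0 < a.
  have := aP Z1 SZ1; have := infE Z1 SZ1; rewrite -(subr_ge0 (inf E)).
  by case: (ltP 0 a) => // a0 d0 h; have := mulr_le0_ge0 a0 d0; lra.
suff : inf E + a^-1 <= inf E by rewrite gerDl leNgt invr_gt0 a0.
apply: lb_le_inf; first by exists (g Z1), Z1.
move=> _ [Z SZ <-].
have : a^-1 <= g Z - inf E by rewrite -(ler_pM2l a0) mulfV ?gt_eqF ?aP.
lra.
Qed.

Lemma C1_on_continuous (O : set M) (f : M -> R) : C1_on O f -> forall Y, O Y ->
  forall e, 0 < e -> exists2 d, 0 < d & forall Z, fnorm (Z - Y) < d -> `|f Z - f Y| < e.
Proof.
move=> [G [fG _]] Y OY e e0.
have [d1 d10 fd1] := fG Y OY 1 ltr01.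
set c := fnorm (G Y) + 1; have c0 : 0 < c by rewrite ltr_wpDl ?fnorm_ge0.
exists (Num.min d1 (e / c)); first by rewrite lt_min d10 divr_gt0.
move=> Z; rewrite lt_min => /andP [Zd1 Zec].
have := fd1 (Z - Y) Zd1; rewrite [Y + _]addrC subrK mul1r ler_norml => /andP [lo hi].
have := frob_inner_le (G Y) (Z - Y).
have := frob_inner_le (G Y) (- (Z - Y)); rewrite frob_innerN fnormN.
have : fnorm (Z - Y) * c < e by rewrite -ltr_pdivlMr.
have := fnorm_ge0 (Z - Y); have := fnorm_ge0 (G Y).
by rewrite ltr_norml /c; move=> *; apply/andP; split; nra.
Qed.

End sequential_compactness.

Section penalty.
Variables (R : realType) (n r : nat).
Local Notation M := 'M[R]_(n, r).
Local Notation Splus := (@stiefel_nonneg R n r).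
Implicit Types (X Y Z Xs : M) (f : M -> R).

Lemma seq_compact_stiefel_nonneg : seq_compact Splus.
Proof. by apply: seq_compact_closed; [move=> X [] | exact: closed_stiefel_nonneg]. Qed.

Lemma exists_proj X : (r <= n)%N -> exists Xb, Defs.proj Splus X Xb.
Proof.
move=> rn; have dc : cont_within Splus (fun W => fnorm (X - W)).
  move=> Y _ e e0; exists e => // Z _ ZY.
  have := fnorm_distD X Z Y; have := fnorm_distD X Y Z; rewrite [fnorm (Y - Z)]fnormB.
  by rewrite ltr_norml; move=> *; apply/andP; split; lra.
have [Xb XbS Xbmin] := seq_compact_argmin seq_compact_stiefel_nonneg
  (ex_intro _ _ (@pid_mx_stiefel_nonneg R n r rn)) dc.
by exists Xb.
Qed.

Lemma is_min_lmin glob (S : set M) f X : is_min glob S f X -> is_lmin S f X.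
Proof. by case: glob => // -[SX Xmin]; split=> //; exists 1 => // Y SY _; apply: Xmin. Qed.

(* The nearest point [Xb] of [S+] to [X] stays in the neighbourhood where [Xs]
   is minimal, and [f X - f Xb >= - L |X - Xb|^2 >= - L K^2 |max(0,-X)|^2]. *)
Lemma penalty_local_ineq f Xs (dl L K d0 : R) : (r <= n)%N -> is_lmin Splus f Xs ->
  0 < dl -> 0 <= L -> lip_cond f Xs dl L -> 0 <= K -> 0 < d0 ->
  (forall X, stiefel X -> fnorm (X - Xs) <= d0 -> mdist X Splus <= K * fnorm (negpart X)) ->
  exists2 d, 0 < d & forall X, stiefel X -> fnorm (X - Xs) <= d ->
    0 <= f X - f Xs + K ^+ 2 * L * fnorm (negpart X) ^+ 2.
Proof.
move=> rn [XsS [e e0 Xs_min]] dl0 L0 lip K0 d00 err.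
exists (Num.min (Num.min d0 dl) (e / 3)); first by rewrite !lt_min d00 dl0 divr_gt0.
move=> X XX; rewrite !le_min => /andP [/andP [Xd0 Xdl] Xe].
have [Xb Xb_proj] := exists_proj X rn.
have f_le := lip X XX Xdl Xb Xb_proj.
have XXb : fnorm (X - Xb) <= K * fnorm (negpart X).
  exact: le_trans (proj_le_mdist Xb_proj) (err X XX Xd0).
have fXs_le : f Xs <= f Xb.
  apply: Xs_min; first exact: Xb_proj.1.
  have := fnorm_distD Xb X Xs; rewrite [fnorm (Xb - X)]fnormB.
  have := Xb_proj.2 Xs XsS; lra.
have : fnorm (X - Xb) ^+ 2 <= K ^+ 2 * fnorm (negpart X) ^+ 2.
  by rewrite -exprMn lerXn2r ?nnegrE ?mulr_ge0 ?fnorm_ge0.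
have := mulr_ge0 L0 (sqr_ge0 (fnorm (X - Xb))); nra.
Qed.

Lemma min_entry_penalty_ineq f Xs (dl L m K : R) : (r <= n)%N -> is_lmin Splus f Xs ->
  ((1 < r)%N -> no_zero_rows Xs) -> is_min_nz_entry Xs m ->
  0 < dl -> 0 <= L -> lip_cond f Xs dl L ->
  0 <= K -> error_bound_const R n r <= (K * m) ^+ 2 ->
  exists2 d, 0 < d & forall X, stiefel X -> fnorm (X - Xs) <= d ->
    0 <= f X - f Xs + K ^+ 2 * L * fnorm (negpart X) ^+ 2.
Proof.
move=> rn Xsmin Xs_rows Xs_min dl0 L0 lip K0 CK.
have m0 := min_nz_entry_gt0 Xsmin.1.1 Xs_min.
apply: (penalty_local_ineq rn Xsmin dl0 L0 lip K0 (divr_gt0 m0 (ltr0n _ 10))).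
exact: stiefel_nonneg_error_bound Xsmin.1 Xs_rows Xs_min K0 CK.
Qed.

End penalty.

Section exact_penalty.
Variables (R : realType) (n r : nat) (O : set 'M[R]_(n, r)) (f : 'M[R]_(n, r) -> R).
Local Notation M := 'M[R]_(n, r).
Local Notation Splus := (@stiefel_nonneg R n r).
Implicit Types (X Y Z Xs : M).
Hypotheses (fC1 : C1_on O f) (stO : @stiefel R n r `<=` O).
Hypothesis local_ineq : forall Xs, is_gmin Splus f Xs ->
  exists2 d : R, 0 < d & exists c : R, forall X, stiefel X -> fnorm (X - Xs) <= d ->
    0 <= f X - f Xs + c * fnorm (negpart X) ^+ 2.
Variables (X0 : M) (X0min : is_gmin Splus f X0).

Definition penalty_bound (rho : R) Z := f X0 <= f Z + rho * fnorm (negpart Z) ^+ 2.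

Lemma penalty_bound_le rho rho' Z : rho <= rho' ->
  penalty_bound rho Z -> penalty_bound rho' Z.
Proof.
rewrite /penalty_bound => le_rho /le_trans; apply.
by rewrite lerD2l ler_wpM2r ?sqr_ge0.
Qed.

Lemma penalty_bound_infeasible Y : stiefel Y -> ~ nonneg_mx Y ->
  exists2 d, 0 < d & exists rho, forall Z, fnorm (Z - Y) < d -> penalty_bound rho Z.
Proof.
move=> YS /existsNP [i /existsNP [j /negP]]; rewrite -ltNge => Yij.
have [t tE] : exists t, t = - Y i j by exists (- Y i j).
have t0 : 0 < t by rewrite tE oppr_gt0.
have [d1 d10 fY] := C1_on_continuous fC1 (stO YS) ltr01.
exists (Num.min d1 (t / 2)); first by rewrite lt_min d10 divr_gt0.
exists ((`|f X0 - f Y| + 1) / (t / 2) ^+ 2) => Z; rewrite lt_min => /andP [Zd1 Zt].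
have Nt : t / 2 <= negpart Z i j.
  have : `|Z i j - Y i j| < t / 2.
    by have := le_lt_trans (abs_entry_le_fnorm (Z - Y) i j) Zt; rewrite !mxE.
  by rewrite ltr_norml => /andP [lo hi]; have := negpart_ge_opp Z i j; lra.
have N2 : (t / 2) ^+ 2 <= fnorm (negpart Z) ^+ 2.
  rewrite fnorm_sqr; apply: le_trans _ (sqr_entry_le_fnorm2 _ i j).
  by apply: (lerXn2r _ _ _ Nt); rewrite nnegrE ?negpart_ge0 // divr_ge0 // ltW.
have t2 : 0 < (t / 2) ^+ 2 by rewrite exprn_gt0 ?divr_gt0.
have := ler_wpM2l (divr_ge0 (ler_wpDl (normr_ge0 (f X0 - f Y)) ler01) (ltW t2)) N2.
rewrite divfK ?gt_eqF // /penalty_bound.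
have := fY Z Zd1; have := ler_norm (f X0 - f Y); rewrite ltr_norml => ? /andP [? ?] ?.
lra.
Qed.

Lemma penalty_bound_feasible Y : stiefel_nonneg Y ->
  exists2 d, 0 < d & exists rho, forall Z, stiefel Z -> fnorm (Z - Y) < d -> penalty_bound rho Z.
Proof.
move=> YS; have [fX0Y|fYX0] := ltP (f X0) (f Y).
  have gap : 0 < f Y - f X0 by rewrite subr_gt0.
  have [d d0 fY] := C1_on_continuous fC1 (stO YS.2) gap.
  exists d => //; exists 0 => Z _ ZY; rewrite /penalty_bound mul0r addr0.
  by have := fY Z ZY; rewrite ltr_norml => /andP [lo _]; lra.
have Ymin : is_gmin Splus f Y.
  by split=> // Z ZS; apply: le_trans fYX0 (X0min.2 Z ZS).
have [d d0 [c cY]] := local_ineq Ymin; exists d => //; exists c => Z ZS ZY.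
have := cY Z ZS (ltW ZY); have := X0min.2 Y YS; rewrite /penalty_bound; lra.
Qed.

Lemma exists_uniform_penalty_bound : exists rho, 0 <= rho /\
  forall Z, stiefel Z -> penalty_bound rho Z.
Proof.
have Sc : seq_compact (@stiefel R n r).
  by apply: (@seq_compact_closed R n r) => //; apply: closed_stiefel.
have [rho rhoP] : exists rho, forall Z, stiefel Z -> penalty_bound rho Z.
  apply: seq_compact_uniform Sc (fun a b Z _ => @penalty_bound_le a b Z) _ => Y YS.
  have [YN|YN] := pselect (nonneg_mx Y).
    exact: penalty_bound_feasible.
  have [d d0 [rho rhoP]] := penalty_bound_infeasible YS YN.
  by exists d => //; exists rho => Z _; apply: rhoP.
exists (Num.max 0 rho); split; first by rewrite le_max lexx.
by move=> Z ZS; apply: penalty_bound_le (rhoP Z ZS); rewrite le_max lexx orbT.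
Qed.

End exact_penalty.

Lemma exact_penalty (R : realType) (n r : nat) (O : set 'M[R]_(n, r)) (f : 'M[R]_(n, r) -> R) :
  (r <= n)%N -> C1_on O f -> @stiefel R n r `<=` O ->
  (forall Xs, is_gmin (@stiefel_nonneg R n r) f Xs ->
    exists2 d : R, 0 < d & exists c : R, forall X, stiefel X -> fnorm (X - Xs) <= d ->
      0 <= f X - f Xs + c * fnorm (negpart X) ^+ 2) ->
  exists2 rh : R, 0 < rh & forall rho : R, rh <= rho ->
    forall X, is_gmin (@stiefel R n r) (fun Y => f Y + rho * fnorm (negpart Y) ^+ 2) X
              <-> is_gmin (@stiefel_nonneg R n r) f X.
Proof.
move=> rn fC1 stO local_ineq.
have fc : cont_within (@stiefel_nonneg R n r) f.
  move=> Y YS e e0; have [d d0 fY] := C1_on_continuous fC1 (stO _ YS.2) e0.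
  by exists d => // Z _; apply: fY.
have [X0 X0S X0min] := seq_compact_argmin (@seq_compact_stiefel_nonneg R n r)
  (ex_intro _ _ (@pid_mx_stiefel_nonneg R n r rn)) fc.
have [rho' [rho'0 bound]] := exists_uniform_penalty_bound fC1 stO local_ineq (conj X0S X0min).
exists (rho' + 1) => [|rho rho_ge X]; first by rewrite ltr_wpDl.
have pen0 (W : 'M[R]_(n, r)) : nonneg_mx W -> fnorm (negpart W) = 0.
  by move/fnorm_negpart_eq0.
split=> [[XS Xmin] | [XS Xmin]].
  have := Xmin X0 X0S.2; rewrite (pen0 X0 X0S.1) expr0n mulr0 addr0 => fX.
  have NX0 : fnorm (negpart X) = 0.
    apply/eqP; rewrite -sqrf_eq0 eq_le sqr_ge0 andbT.
    have := bound X XS; rewrite /penalty_bound => fX0.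
    have := sqr_ge0 (fnorm (negpart X)); nra.
  have XN := (fnorm_negpart_eq0 X).1 NX0.
  split=> [//|Z ZS]; apply: le_trans (X0min Z ZS).
  by move: fX; rewrite NX0 expr0n mulr0 addr0.
split=> [|Y YS]; first exact: XS.2.
rewrite (pen0 X XS.1) expr0n mulr0 addr0; apply: le_trans (Xmin X0 X0S) _.
apply: le_trans (bound Y YS) _; rewrite lerD2l ler_wpM2r ?sqr_ge0 //; lra.
Qed.

Lemma error_bound_const_le_kappa (R : realType) (n r : nat) (m : R) :
  (1 < r)%N -> (r < n)%N -> 0 < m ->
  error_bound_const R n r <=
  ((21%:R / 10%:R) * Num.sqrt r%:R * (1 + 3%:R * (r * (n - r))%:R) / m * m) ^+ 2.
Proof.
move=> r1 rn m0; rewrite divfK ?gt_eqF // !exprMn sqr_sqrtr ?ler0n // natrM.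
have k2 : (21%:R : R) ^+ 2 * (10%:R)^-1 ^+ 2 = 441 / 100 by rewrite exprVn -!natrX.
rewrite k2 /error_bound_const.
have -> : n%:R = r%:R + (n - r)%:R :> R by rewrite -natrD subnKC // ltnW.
set a : R := r%:R; set b : R := (n - r)%:R; set u := a * b.
have a2 : 2 <= a by rewrite /a (ler_nat R 2 r).
have b1 : 1 <= b by rewrite /b (ler_nat R 1) subn_gt0.
have u2 : 2 <= u by rewrite /u; nra.
have ab : (a + b) ^+ 2 * (a + 1) <= 4 * u ^+ 2 * (3 / 2 * a).
  apply: ler_pM; [exact: sqr_ge0 | lra | | lra].
  have -> : 4 * u ^+ 2 = (2 * u) ^+ 2 by ring.
  by apply: lerXn2r; rewrite ?nnegrE /u; nra.
have : a * (9 * u ^+ 2) <= a * (1 + 3 * u) ^+ 2.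
  by rewrite ler_wpM2l; nra.
have : 8 <= a * u ^+ 2.
  by have := mulr_ge0 (_ : 0 <= a - 2) (sqr_ge0 u); nra.
nra.
Qed.

Theorem corollary3p12 (R : realType) (n r : nat) (O : set 'M[R]_(n, r))
    (f : 'M[R]_(n, r) -> R) (glob : bool) :
  (1 <= r)%N -> (r <= n)%N ->
  open_fro O -> @stiefel R n r `<=` O -> C1_on O f ->
  ((1 < r)%N -> (r < n)%N ->
     forall X, is_min glob (@stiefel_nonneg R n r) f X -> no_zero_rows X) ->
  (forall Xs, is_min glob (@stiefel_nonneg R n r) f Xs ->
     exists dl L : R, 0 < dl /\ 0 < L /\ lip_cond f Xs dl L) ->
  (forall Xs, is_min glob (@stiefel_nonneg R n r) f Xs ->
   forall dl L : R, 0 < dl -> 0 < L -> lip_cond f Xs dl L ->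
     (((n == r) || ((r < n) && (r == 1)))%N ->
       forall kp : R, 0 < kp ->
       (forall Z, stiefel Z ->
          mdist Z (@stiefel_nonneg R n r) <= kp * mdist Z (@nonneg_mx R n r)) ->
       exists2 d : R, 0 < d & forall X, stiefel X -> fnorm (X - Xs) <= d ->
         0 <= f X - f Xs + kp ^+ 2 * L * fnorm (negpart X) ^+ 2)
     /\
     ((1 < r)%N -> (r < n)%N ->
       forall m : R, is_min_nz_entry Xs m ->
       let kappa := (21%:R / 10%:R) * Num.sqrt r%:R
                      * (1 + 3%:R * (r * (n - r))%:R) / m in
       exists2 d : R, 0 < d & forall eps : R, 0 <= eps ->
         forall X, level_set eps X -> fnorm (X - Xs) <= d ->
         0 <= f X - f Xs + kappa ^+ 2 * L * fnorm (negpart X) ^+ 2))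
  /\
  (glob = true ->
   exists2 rh : R, 0 < rh & forall rho : R, rh <= rho ->
     forall X, is_gmin (@stiefel R n r) (fun Y => f Y + rho * fnorm (negpart Y) ^+ 2) X
               <-> is_gmin (@stiefel_nonneg R n r) f X).
Proof.
move=> r1 rn _ stO fC1 nzr lip_ex.
have Xs_rows Xs : is_min glob (@stiefel_nonneg R n r) f Xs -> (1 < r)%N -> no_zero_rows Xs.
  move=> Xsmin r1'; have [nr|nr] := eqVneq n r.
    by have [[_ XsS] _] := is_min_lmin Xsmin; apply: square_stiefel_no_zero_rows.
  by apply: nzr Xsmin; rewrite // ltn_neqAle eq_sym nr rn.
split.
  move=> Xs /[dup] /is_min_lmin Xs_lmin Xsmin dl L dl0 L0 lip; have [XsS _] := Xs_lmin.
  (* the case assumption on [n, r] only serves to make such a [kp] exist *)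
  split=> [_ kp kp0 kpP | r1' rn' m Xs_min kappa].
    apply: (penalty_local_ineq rn Xs_lmin dl0 (ltW L0) lip (ltW kp0) ltr01) => X XX _.
    exact: le_trans (kpP X XX) (ler_wpM2l (ltW kp0) (mdist_nonneg_le X)).
  have m0 := min_nz_entry_gt0 XsS.1 Xs_min.
  have kappa0 : 0 <= kappa.
    apply: divr_ge0 (ltW m0); apply: mulr_ge0; last by rewrite addr_ge0 ?mulr_ge0.
    by rewrite mulr_ge0 ?sqrtr_ge0 ?divr_ge0.
  have [d d0 ineq] := min_entry_penalty_ineq rn Xs_lmin (Xs_rows Xs Xsmin) Xs_min dl0
    (ltW L0) lip kappa0 (error_bound_const_le_kappa r1' rn' m0).
  by exists d => // eps _ X [XX _]; apply: ineq.
move=> glob_true; subst glob; apply: (exact_penalty rn fC1 stO) => Xs Xsmin.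
have [dl [L [dl0 [L0 lip]]]] := lip_ex Xs Xsmin.
have [m Xs_min] := exists_min_nz_entry Xsmin.1 r1.
have m0 := min_nz_entry_gt0 Xsmin.1.1 Xs_min.
pose K := Num.sqrt (error_bound_const R n r) / m.
have K0 : 0 <= K by rewrite divr_ge0 ?sqrtr_ge0 ?ltW.
have CK : error_bound_const R n r <= (K * m) ^+ 2.
  by rewrite divfK ?gt_eqF // sqr_sqrtr ?error_bound_const_ge0.
have [d d0 ineq] := min_entry_penalty_ineq rn (is_min_lmin (glob := true) Xsmin)
  (Xs_rows Xs Xsmin) Xs_min dl0 (ltW L0) lip K0 CK.
by exists d => //; exists (K ^+ 2 * L).
Qed.
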